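(* The Banach lattice $c_0$ is complemented in $FBL[c_0]$: there exist a Banach lattice homomorphism $u: c_0 \to FBL[c_0]$ which is an isometric embedding and a surjective Banach lattice homomorphism $T: FBL[c_0]\to c_0$ with $T\circ u = \mathrm{id}_{c_0}$.
   Context: For a Banach space $E$, for $x\in E$ let $\delta_x: E^*\to\mathbb{R}$, $\delta_x(x^* )=x^*(x)$. For $f: E^*\to\mathbb{R}$ put $$\|f\|_{FBL[E]} = \sup \Big\{\sum_{i = 1}^n |f(x_{i}^{*})| : n \in \mathbb{N},\ x_1^{*}, \ldots, x_n^{*} \in E^{*},\ \sup_{x \in B_E} \sum_{i=1}^n |x_i^{*}(x)| \leq 1 \Big\}.$$ The free Banach lattice $FBL[E]$ generated by $E$ is the closure, with respect to this norm, of the vector sublattice of $\mathbb{R}^{E^*}$ (pointwise operations and order) generated by $\{\delta_x : x\in E\}$. Here $E=c_0$ with $c_0^*=\ell_1$. In the paper the map $T$ is $T(f)=(f(e_1^* ),f(e_2^* ),\ldots)$, where $e_n^*$ are the unit vectors of $\ell_1$. *)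

From HB Require Import structures.
From mathcomp Require Import all_boot all_order all_algebra.
From mathcomp Require Import all_classical all_reals all_analysis.
Set Implicit Arguments. Unset Strict Implicit. Unset Printing Implicit Defensive.
Import Order.TTheory GRing.Theory Num.Theory.
Import numFieldNormedType.Exports.
Local Open Scope classical_set_scope.
Local Open Scope ring_scope.

Section FBL.
Variable R : realType.

Definition c0 (x : nat -> R) : Prop := x @ \oo --> (0 : R).

Definition c0norm (x : nat -> R) : R := sup [set `|x n| | n in [set: nat]].

(* E^* = l_1 : absolutely summable sequences *)
Definition summable (a : nat -> R) : Prop :=
  cvgn (series (fun k => `|a k|)).

Record l1 := L1 { l1seq :> nat -> R ; l1P : summable l1seq }.

Definition pair (a : l1) (x : nat -> R) : R :=
  limn (series (fun k => a k * x k)).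

Definition delta (x : nat -> R) : l1 -> R := fun a => pair a x.

Definition admissible (s : seq l1) : Prop :=
  forall x, c0 x -> c0norm x <= 1 -> \sum_(a <- s) `|pair a x| <= 1.

Definition fbl_norm (f : l1 -> R) : \bar R :=
  ereal_sup [set (\sum_(a <- s) `|f a|)%:E | s in admissible].

Inductive gen_lat : (l1 -> R) -> Prop :=
  | gen_delta x : c0 x -> gen_lat (delta x)
  | gen_add f g : gen_lat f -> gen_lat g -> gen_lat (fun a => f a + g a)
  | gen_scale (c : R) f : gen_lat f -> gen_lat (fun a => c * f a)
  | gen_max f g : gen_lat f -> gen_lat g -> gen_lat (fun a => Num.max (f a) (g a)).

Definition FBL (f : l1 -> R) : Prop :=
  forall e : R, 0 < e ->
    exists g, gen_lat g /\ (fbl_norm (fun a => (f a - g a)%R) < e%:E)%E.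

Definition lattice_hom_isometry_c0_FBL (u : (nat -> R) -> l1 -> R) : Prop :=
  [/\ forall x, c0 x -> FBL (u x),
      forall x y, c0 x -> c0 y -> u (fun n => x n + y n) = (fun a => u x a + u y a),
      forall (c : R) x, c0 x -> u (fun n => c * x n) = (fun a => c * u x a),
      forall x y, c0 x -> c0 y ->
        u (fun n => Num.max (x n) (y n)) = (fun a => Num.max (u x a) (u y a))
    & forall x, c0 x -> fbl_norm (u x) = (c0norm x)%:E].

Definition surj_lattice_hom_FBL_c0 (T : (l1 -> R) -> nat -> R) : Prop :=
  [/\ forall f, FBL f -> c0 (T f),
      (forall f g, FBL f -> FBL g -> T (fun a => f a + g a) = (fun n => T f n + T g n)) /\
      (forall (c : R) f, FBL f -> T (fun a => c * f a) = (fun n => c * T f n)),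
      forall f g, FBL f -> FBL g ->
        T (fun a => Num.max (f a) (g a)) = (fun n => Num.max (T f n) (T g n)),
      exists C : R, forall f, FBL f -> (((c0norm (T f))%:E <= C%:E * fbl_norm f)%E)
    & forall y, c0 y -> exists f, FBL f /\ T f = y].

End FBL.

From Pilot Require Import Defs.
From HB Require Import structures.
From mathcomp Require Import all_boot all_order all_algebra.
From mathcomp Require Import all_classical all_reals all_analysis.
From mathcomp Require Import ring lra.
Set Implicit Arguments. Unset Strict Implicit. Unset Printing Implicit Defensive.
Import Order.TTheory GRing.Theory Num.Theory.
Import numFieldNormedType.Exports.
Local Open Scope classical_set_scope.
Local Open Scope ring_scope.

(* Write e_n^* for the unit vectors of l_1 = c_0^*.  The map
   T f = (f(e_n^* ))_n is a lattice homomorphism of norm at most 1, since each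
   singleton {e_n^*} is admissible; it sends the generators delta_x to x, hence
   FBL[c_0] into c_0 (by density) and onto c_0.

   For the embedding let w(a) = sum_m 2^-m |a_m| and
     phi_n(a) = max(0, (1 + 2^-n) |a_n| - 2^n sum_(m<n) |a_m| - w(a)).
   For n < k, phi_n(a) > 0 forces |a_n| > 2^-k |a_k| while phi_k(a) > 0 forces
   |a_k| > 2^k |a_n|, so the phi_n have disjoint supports; moreover
   phi_n(e_k^* ) = [n = k] and 0 <= phi_n(a) <= |a_n|.  Hence u x = sum_n x_n phi_n
   is a lattice homomorphism with T (u x) = x.  It is an isometry because,
   averaging |sum_m a_m eps_m| over random signs eps, every admissible family
   (a_i) satisfies sum_i |a_i(p_i)| <= 1 for any choice of coordinates p_i.
   Finally, replacing w by its truncation w_N turns phi_n into a lattice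
   expression psi_n in finitely many coordinates, with 0 <= psi_n - phi_n <= w - w_N;
   as sum_i (w - w_N)(a_i) <= 2^(1-N) on admissible families, the functions
   sum_(n<N) x_n psi_n converge to u x in FBL[c_0]. *)

Section FBLc0.
Variable R : realType.
Implicit Types (x y : nat -> R) (a : l1 R) (s : seq (l1 R)).

Lemma big_ord_single (F : nat -> R) k N : (k < N)%N ->
  (forall m, (m < N)%N -> m != k -> F m = 0) -> \sum_(m < N) F m = F k.
Proof.
move=> kN F0; rewrite (bigD1 (Ordinal kN)) //= big1 ?addr0 // => i ik.
by apply: F0 => //; apply: contra ik => /eqP ik; apply/eqP/val_inj.
Qed.

Lemma ler_sum_ord_term (F : nat -> R) k N : (forall m, 0 <= F m) -> (k < N)%N ->
  F k <= \sum_(m < N) F m.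
Proof. by move=> F0 kN; rewrite (bigD1 (Ordinal kN)) //= lerDl sumr_ge0. Qed.

Lemma ler_sum_ord_terms2 (F : nat -> R) n k N : (forall m, 0 <= F m) -> n != k ->
  (n < N)%N -> (k < N)%N -> F n + F k <= \sum_(m < N) F m.
Proof.
move=> F0 nk nN kN; rewrite (bigD1 (Ordinal nN)) //= lerD2l.
rewrite (bigD1 (Ordinal kN)) /=; last by apply: contra nk => /eqP [->].
by rewrite lerDl sumr_ge0.
Qed.

Lemma ler_sum_seq_all (I : Type) (s : seq I) (P : pred I) (F G : I -> R) :
  all P s -> (forall i, P i -> F i <= G i) -> \sum_(i <- s) F i <= \sum_(i <- s) G i.
Proof.
move=> + FG; elim: s => [|i s IH]; rewrite ?big_nil ?big_cons //= => /andP[Pi Ps].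
exact: lerD (FG _ Pi) (IH Ps).
Qed.

Lemma series_eventually0 (F : nat -> R) N : (forall m, (N <= m)%N -> F m = 0) ->
  series F @ \oo --> \sum_(m < N) F m.
Proof.
move=> F0; apply: cvg_near_cst; exists N => // n /= /subnK <-.
elim: (n - N)%N => [|d IH]; first by rewrite /series /= add0n big_mkord.
rewrite /series /= addSn big_nat_recr ?leq_addl //= F0 ?leq_addl // addr0.
exact: IH.
Qed.

Lemma limn_series_eventually0 (F : nat -> R) N : (forall m, (N <= m)%N -> F m = 0) ->
  limn (series F) = \sum_(m < N) F m.
Proof. by move=> F0; apply/cvg_lim/series_eventually0. Qed.

Lemma limn_series_single (F : nat -> R) k : (forall m, m != k -> F m = 0) ->
  limn (series F) = F k.
Proof.
move=> F0; rewrite (@limn_series_eventually0 _ k.+1) => [|m km].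
  by apply: big_ord_single => // m _; exact: F0.
by apply: F0; rewrite neq_ltn km orbT.
Qed.

Lemma cvg_sum_seq (I : Type) (s : seq I) (u : I -> nat -> R) (l : I -> R) :
  (forall i, u i @ \oo --> l i) ->
  (fun n => \sum_(i <- s) u i n) @ \oo --> \sum_(i <- s) l i.
Proof.
move=> ul; elim: s => [|i s IH].
  by rewrite big_nil; under eq_fun do rewrite big_nil; exact: cvg_cst.
by rewrite big_cons; under eq_fun do rewrite big_cons; exact: cvgD.
Qed.

Lemma c0_eventually0 y N : (forall m, (N <= m)%N -> y m = 0) -> c0 y.
Proof. by move=> y0; apply: cvg_near_cst; exists N => // n /= /y0. Qed.

Lemma ler_c0norm x n : c0 x -> `|x n| <= c0norm x.
Proof.
move=> x0; have /cvg_seq_bounded [M [_ xM]] : cvgn x by apply/cvg_ex; exists 0.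
apply: ub_le_sup; last by exists n.
by exists (M + 1) => _ [m _ <-]; apply: (xM (M + 1)); rewrite ?ltrDl.
Qed.

Lemma c0norm_le x B : (forall n, `|x n| <= B) -> c0norm x <= B.
Proof.
move=> xB; apply: ge_sup; first by exists `|x 0%N|, 0%N.
by move=> _ [m _ <-].
Qed.

Lemma c0norm_ge0 x : c0 x -> 0 <= c0norm x.
Proof. by move=> x0; apply: le_trans (ler_c0norm 0 x0). Qed.

Definition unitv n : nat -> R := fun m => (m == n)%:R.

Lemma unitv_neq n m : m != n -> unitv n m = 0.
Proof. by rewrite /unitv => /negbTE ->. Qed.

Lemma c0_unitv n : c0 (unitv n).
Proof. by apply: (@c0_eventually0 _ n.+1) => m nm; rewrite unitv_neq // neq_ltn nm orbT. Qed.

Lemma c0norm_unitv_le1 n : c0norm (unitv n) <= 1.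
Proof. by apply: c0norm_le => m; rewrite normr_nat lern1 leq_b1. Qed.

Lemma summable_unitv n : Defs.summable (unitv n).
Proof.
apply/cvg_ex; exists (\sum_(m < n.+1) `|unitv n m|).
by apply: series_eventually0 => m nm; rewrite unitv_neq ?normr0 // neq_ltn nm orbT.
Qed.

Definition estar n : l1 R := L1 (@summable_unitv n).

Lemma pair_unitv a n : Defs.pair a (unitv n) = a n.
Proof.
rewrite /Defs.pair (@limn_series_single _ n) /unitv ?eqxx ?mulr1 // => m mn.
by rewrite (negbTE mn) mulr0.
Qed.

Lemma pair_estar n x : Defs.pair (estar n) x = x n.
Proof.
rewrite /Defs.pair (@limn_series_single _ n) /= /unitv ?eqxx ?mul1r // => m mn.
by rewrite (negbTE mn) mul0r.
Qed.

Lemma pair_eventually0 a y N : (forall m, (N <= m)%N -> y m = 0) ->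
  Defs.pair a y = \sum_(m < N) a m * y m.
Proof.
by move=> y0; rewrite /Defs.pair (@limn_series_eventually0 _ N) // => m /y0 ->; rewrite mulr0.
Qed.

Lemma fbl_norm_ge (f : l1 R -> R) s : admissible s ->
  ((\sum_(a <- s) `|f a|)%:E <= fbl_norm f)%E.
Proof. by move=> adm; apply: ereal_sup_ubound; exists s. Qed.

Lemma fbl_norm_le (f : l1 R -> R) B :
  (forall s, admissible s -> \sum_(a <- s) `|f a| <= B) -> (fbl_norm f <= B%:E)%E.
Proof. by move=> fB; apply: ge_ereal_sup => _ [s adm <-]; rewrite lee_fin fB. Qed.

Lemma admissible_estar n : admissible [:: estar n].
Proof. by move=> x x0 x1; rewrite big_seq1 pair_estar (le_trans (ler_c0norm n x0)). Qed.

Definition coords (f : l1 R -> R) : nat -> R := fun n => f (estar n).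

Lemma fbl_norm_ge_coord (f : l1 R -> R) n : ((`|coords f n|)%:E <= fbl_norm f)%E.
Proof. by have := fbl_norm_ge f (admissible_estar n); rewrite big_seq1. Qed.

Lemma c0norm_coords_le (f : l1 R -> R) : ((c0norm (coords f))%:E <= fbl_norm f)%E.
Proof.
case E : (fbl_norm f) (fbl_norm_ge_coord f 0) => [r| |] //; last by move=> _; exact: leey.
move=> _; rewrite lee_fin; apply: c0norm_le => n.
by rewrite -lee_fin -E; exact: fbl_norm_ge_coord.
Qed.


Lemma max_cvg0 x y : x @ \oo --> 0 -> y @ \oo --> 0 ->
  (fun n => Num.max (x n) (y n)) @ \oo --> 0.
Proof.
move=> /cvgr0Pnorm_lt x0 /cvgr0Pnorm_lt y0; apply/cvgr0Pnorm_lt => e e0.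
near=> n; have xe : `|x n| < e by near: n; exact: x0.
have ye : `|y n| < e by near: n; exact: y0.
by case: (leP (x n) (y n)).
Unshelve. all: end_near.
Qed.

Lemma c0_coords_gen_lat (g : l1 R -> R) : gen_lat g -> c0 (coords g).
Proof.
elim=> {g} [x x0|f g _ f0 _ g0|c f _ f0|f g _ f0 _ g0].
- by rewrite /coords /delta; under eq_fun do rewrite pair_estar.
- by rewrite /c0 /coords -(addr0 0); exact: cvgD.
- by rewrite /c0 /coords -(mulr0 c); exact: cvgMr.
- exact: max_cvg0.
Qed.

Lemma c0_coords_FBL (f : l1 R -> R) : FBL f -> c0 (coords f).
Proof.
move=> fFBL; apply/cvgr0Pnorm_lt => e e0.
have e2 : 0 < e / 2 by rewrite divr_gt0.
have [g [gen_g fg]] := fFBL _ e2.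
have /cvgr0Pnorm_lt g0 := c0_coords_gen_lat gen_g.
near=> n; have gn : `|coords g n| < e / 2 by near: n; exact: g0.
have fgn : `|coords f n - coords g n| < e / 2.
  rewrite -lte_fin; apply: le_lt_trans fg.
  exact: (fbl_norm_ge_coord (fun a => f a - g a)).
rewrite -(subrK (coords g n) (coords f n)) (splitr e).
exact: le_lt_trans (ler_normD _ _) (ltrD fgn gn).
Unshelve. all: end_near.
Qed.

Lemma FBL_delta x : c0 x -> FBL (delta x).
Proof.
move=> x0 e e0; exists (delta x); split; first exact: gen_delta.
apply: le_lt_trans (_ : (_ <= 0%:E)%E) _; last by rewrite lte_fin.
by apply: fbl_norm_le => s _; rewrite big1 // => a _; rewrite subrr normr0.
Qed.

Lemma coords_delta x : coords (delta x) = x.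
Proof. by apply: funext => n; rewrite /coords /delta pair_estar. Qed.

Lemma coords_surj_lattice_hom : surj_lattice_hom_FBL_c0 coords.
Proof.
split=> //; first exact: c0_coords_FBL.
  by exists 1 => f _; rewrite mul1e c0norm_coords_le.
by move=> x x0; exists (delta x); split; [exact: FBL_delta | exact: coords_delta].
Qed.

Definition set_coord y N v : nat -> R := fun m => if m == N then v else y m.

(* The mean of [g] over the [2 ^ N] sign vectors (eps_0, ..., eps_(N-1), 0, 0, ...). *)
Fixpoint sign_avg N (g : (nat -> R) -> R) : R :=
  if N is N'.+1 then
    (sign_avg N' (fun y => g (set_coord y N' 1))
     + sign_avg N' (fun y => g (set_coord y N' (-1)))) / 2
  else g (fun=> 0).

Definition in_ball_below N y := (forall m, (N <= m)%N -> y m = 0) /\ (forall m, `|y m| <= 1).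

Lemma in_ball_below_set_coord N y v :
  in_ball_below N y -> `|v| <= 1 -> in_ball_below N.+1 (set_coord y N v).
Proof.
move=> [y0 y1] v1; split=> m; rewrite /set_coord; last by case: eqP.
by move=> Nm; rewrite gtn_eqF // y0 // ltnW.
Qed.

Lemma sign_avg_le N (g1 g2 : (nat -> R) -> R) :
  (forall y, in_ball_below N y -> g1 y <= g2 y) -> sign_avg N g1 <= sign_avg N g2.
Proof.
elim: N g1 g2 => [|N IH] g1 g2 g12 /=; first by apply: g12; split=> // m; rewrite normr0.
rewrite ler_pM2r ?invr_gt0 //; apply: lerD; apply: IH => y y1; apply: g12;
  by apply: in_ball_below_set_coord => //; rewrite ?normrN normr1.
Qed.

Lemma sign_avg_cst N c : sign_avg N (fun=> c) = c.
Proof. by elim: N => //= N ->; lra. Qed.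

Lemma sign_avgD N (g1 g2 : (nat -> R) -> R) :
  sign_avg N (fun y => g1 y + g2 y) = sign_avg N g1 + sign_avg N g2.
Proof. by elim: N g1 g2 => //= N IH g1 g2; rewrite !IH -mulrDl addrACA. Qed.

Lemma sign_avg_sum N (I : Type) (s : seq I) (h : I -> (nat -> R) -> R) :
  sign_avg N (fun y => \sum_(i <- s) h i y) = \sum_(i <- s) sign_avg N (h i).
Proof.
elim: s => [|i s IH].
  by rewrite big_nil; under eq_fun do rewrite big_nil; exact: sign_avg_cst.
by rewrite big_cons -IH -sign_avgD; under eq_fun do rewrite big_cons.
Qed.

Lemma sign_avg_ge_coef N (b : nat -> R) c k : (k < N)%N ->
  `|b k| <= sign_avg N (fun y => `|c + \sum_(m < N) b m * y m|).
Proof.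
elim: N c => // N IH c; rewrite ltnS leq_eqVlt /=.
have avg_set_coord v : sign_avg N (fun y => `|c + \sum_(m < N.+1) b m * set_coord y N v m|) =
    sign_avg N (fun y => `|(c + b N * v) + \sum_(m < N) b m * y m|).
  congr sign_avg; apply: funext => y; rewrite big_ord_recr /= /set_coord eqxx addrAC addrA.
  by congr (`|_ + _ + _|); apply: eq_bigr => i _; rewrite ltn_eqF.
rewrite !avg_set_coord mulr1 mulrN1 => /orP[/eqP->|kN]; last first.
  by have := IH (c + b N) kN; have := IH (c - b N) kN; lra.
rewrite ler_pdivlMr // -[X in X <= _](sign_avg_cst N) -sign_avgD.
apply: sign_avg_le => y _; set t := \sum_(m < N) _.
have := ler_normB (c + b N + t) (c - b N + t).
by rewrite (_ : _ - _ = b N * 2) ?normrM ?normr_nat //; ring.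
Qed.

Lemma admissible_sum_coord_le s (p : l1 R -> nat) : admissible s ->
  \sum_(a <- s) `|a (p a)| <= 1.
Proof.
move=> adm; have [N sN] : exists N, all (fun a => p a < N)%N s.
  elim: s {adm} => [|a s [N sN]]; first by exists 0%N.
  exists (maxn (p a).+1 N); rewrite /= leq_max ltnSn /=.
  by apply: sub_all sN => b pbN; rewrite leq_max pbN orbT.
pose avg a := sign_avg N (fun y => `|0 + \sum_(m < N) a m * y m|).
apply: le_trans (ler_sum_seq_all (G := avg) sN _) _.
  by move=> a; exact: sign_avg_ge_coef.
rewrite -sign_avg_sum -(sign_avg_cst N 1); apply: sign_avg_le => y [y0 y1].
under eq_bigr do rewrite add0r -(pair_eventually0 _ y0).
exact: adm (c0_eventually0 y0) (c0norm_le y1).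
Qed.

Local Notation q := (2^-1 : R).

Lemma qpow_gt0 m : 0 < q ^+ m. Proof. by rewrite exprn_gt0 ?invr_gt0. Qed.

Lemma qpow_ge0 m : 0 <= q ^+ m. Proof. exact/ltW/qpow_gt0. Qed.

Definition wt a m := `|a m| * q ^+ m.
Definition wnorm_trunc N a := series (wt a) N.
Definition wnorm a := limn (series (wt a)).

Lemma wt_ge0 a m : 0 <= wt a m. Proof. by rewrite mulr_ge0 ?qpow_ge0. Qed.

Lemma is_cvg_series_wt a : cvgn (series (wt a)).
Proof.
apply: (series_le_cvg (v_ := fun k => `|a k|)) (@l1P R a) => // k; first exact: wt_ge0.
by rewrite ler_piMr // exprn_ile1 ?invr_ge0 ?invf_le1 ?ler1n.
Qed.

Lemma wnorm_trunc_le a N : wnorm_trunc N a <= wnorm a.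
Proof.
apply: nondecreasing_cvgn_le; last exact: is_cvg_series_wt.
by apply: nondecreasing_series => n _ _; exact: wt_ge0.
Qed.

Lemma wnorm_trunc_ge_wt2 a n k N : n != k -> (n < N)%N -> (k < N)%N ->
  wt a n + wt a k <= wnorm_trunc N a.
Proof.
move=> nk nN kN; rewrite /wnorm_trunc /series /= big_mkord.
by rewrite ler_sum_ord_terms2 // => m; exact: wt_ge0.
Qed.

Lemma wnorm_ge_wt2 a n k : n != k -> wt a n + wt a k <= wnorm a.
Proof.
move=> nk; apply: le_trans (wnorm_trunc_le a (maxn n k).+1).
by apply: wnorm_trunc_ge_wt2; rewrite // ltnS ?leq_maxl ?leq_maxr.
Qed.

Lemma wnorm_ge_wt a n : wt a n <= wnorm a.
Proof.
have nSn : n != n.+1 by rewrite neq_ltn ltnSn.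
by apply: le_trans (wnorm_ge_wt2 a nSn); rewrite lerDl wt_ge0.
Qed.

Lemma wnorm_estar k : wnorm (estar k) = q ^+ k.
Proof.
rewrite /wnorm (@limn_series_single _ k) /wt /= /unitv ?eqxx ?normr1 ?mul1r // => m mk.
by rewrite (negbTE mk) normr0 mul0r.
Qed.

Definition peak (T : l1 R -> R) n a :=
  Num.max 0 ((1 + q ^+ n) * `|a n| - 2 ^+ n * \sum_(m < n) `|a m| - T a).

Lemma peak_ge0 T n a : 0 <= peak T n a.
Proof. by rewrite le_max lexx. Qed.

Lemma peak_disjoint T a n k : n != k -> wt a n + wt a k <= T a ->
  0 < peak T n a -> peak T k a = 0.
Proof.
move=> nk Tnk pn; apply/le_anti; rewrite peak_ge0 andbT leNgt; apply/negP => pk.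
wlog {nk} lt_nk : n k Tnk pn pk / (n < k)%N.
  move=> wlog_lt; case: (ltngtP n k) nk => // [nk _|kn _].
    exact: (wlog_lt n k).
  by apply: (wlog_lt k n) => //; rewrite addrC.
move: pn pk; rewrite !lt_max ltxx /=.
have sum_ge0 : 0 <= 2 ^+ n * \sum_(m < n) `|a m| by rewrite mulr_ge0 ?exprn_ge0 ?sumr_ge0.
have sum_ge : 2 ^+ k * `|a n| <= 2 ^+ k * \sum_(m < k) `|a m|.
  by rewrite ler_wpM2l ?exprn_ge0 // (ler_sum_ord_term (fun m => normr_ge0 (a m)) lt_nk).
have wtn := wt_ge0 a n; move: Tnk wtn; rewrite /wt => Tnk wtn pn pk.
have an_big : q ^+ k * `|a k| < `|a n| by lra.
have ak_big : 2 ^+ k * `|a n| < `|a k| by lra.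
move: ak_big; rewrite -(ltr_pM2l (qpow_gt0 k)) mulrA -exprMn mulVf // expr1n mul1r.
by rewrite ltNge ltW.
Qed.

Lemma peak_antitone T1 T2 n a : T1 a <= T2 a -> peak T2 n a <= peak T1 n a.
Proof. by move=> T12; rewrite /peak le_max2 // lerB. Qed.

Lemma peak_sub_le T1 T2 n a : T1 a <= T2 a -> peak T1 n a - peak T2 n a <= T2 a - T1 a.
Proof.
rewrite /peak; set X := (1 + _) * _ - _ => T12.
have M0 : 0 <= Num.max 0 (X - T2 a) by rewrite le_max lexx.
have XM : X - T2 a <= Num.max 0 (X - T2 a) by rewrite le_max lexx orbT.
rewrite lerBlDl ge_max; apply/andP; split; lra.
Qed.

Definition phi := peak wnorm.
Definition psi N := peak (wnorm_trunc N).

Lemma phi_disjoint a n k : n != k -> 0 < phi n a -> phi k a = 0.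
Proof. by move=> nk; apply: peak_disjoint nk (wnorm_ge_wt2 a nk). Qed.

Lemma psi_disjoint N a n k : n != k -> (n < N)%N -> (k < N)%N ->
  0 < psi N n a -> psi N k a = 0.
Proof. by move=> nk nN kN; apply: peak_disjoint nk (wnorm_trunc_ge_wt2 a nk nN kN). Qed.

Lemma phi_le_psi N n a : phi n a <= psi N n a.
Proof. exact/peak_antitone/wnorm_trunc_le. Qed.

Lemma psi_sub_phi_le N n a : psi N n a - phi n a <= wnorm a - wnorm_trunc N a.
Proof. exact/peak_sub_le/wnorm_trunc_le. Qed.

Lemma phi_le_abs n a : phi n a <= `|a n|.
Proof.
rewrite ge_max normr_ge0 /=; have := wnorm_ge_wt a n; rewrite /wt.
have : 0 <= 2 ^+ n * \sum_(m < n) `|a m| by rewrite mulr_ge0 ?exprn_ge0 ?sumr_ge0.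
lra.
Qed.

Lemma phi_estar n k : phi n (estar k) = (n == k)%:R.
Proof.
rewrite /phi /peak wnorm_estar /= /unitv.
have [->|nk] := eqVneq n k.
  rewrite big1 => [|i _]; last by rewrite ltn_eqF ?normr0.
  by rewrite normr1 mulr1 mulr0 subr0 addrK; apply/max_idPr; exact: ler01.
rewrite mulr0n normr0 mulr0 sub0r; apply/max_idPl.
by rewrite -opprD oppr_le0 addr_ge0 ?qpow_ge0 // mulr_ge0 ?exprn_ge0 ?sumr_ge0.
Qed.

Definition phi_index a := xget 0%N [set k | 0 < phi k a].

Lemma phi_neq_index a n : n != phi_index a -> phi n a = 0.
Proof.
move=> nk; have [pn|pn] := ltP 0 (phi n a); last by apply/le_anti; rewrite pn peak_ge0.
have pk : 0 < phi (phi_index a) a := @xgetPex _ 0%N [set k | 0 < phi k a] (ex_intro _ n pn).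
by apply: phi_disjoint pk; rewrite eq_sym.
Qed.

Lemma phi_index_estar k : phi_index (estar k) = k.
Proof.
apply/eqP; rewrite eq_sym; apply/negPn/negP => /phi_neq_index.
by rewrite phi_estar eqxx => /eqP; rewrite oner_eq0.
Qed.

(* [embed x a] is [\sum_n x n * phi n a]: at most [phi (phi_index a) a] is nonzero. *)
Definition embed x a := x (phi_index a) * phi (phi_index a) a.

Lemma coords_embed x : coords (embed x) = x.
Proof. by apply: funext => n; rewrite /coords /embed phi_index_estar phi_estar eqxx mulr1. Qed.

Lemma fbl_norm_embed x : c0 x -> fbl_norm (embed x) = (c0norm x)%:E.
Proof.
move=> x0; have := c0norm_coords_le (embed x); rewrite coords_embed => ge_x.
apply/le_anti; rewrite ge_x andbT.
apply: fbl_norm_le => s adm; rewrite -[leRHS]mulr1.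
apply: le_trans (ler_wpM2l (c0norm_ge0 x0) (admissible_sum_coord_le phi_index adm)).
rewrite mulr_sumr; apply: ler_sum => a _.
rewrite /embed normrM [`|phi _ _|]ger0_norm ?peak_ge0 //.
by rewrite ler_pM ?peak_ge0 ?ler_c0norm ?phi_le_abs.
Qed.

Lemma sum_phi_index x N a :
  \sum_(n < N) x n * phi n a = if (phi_index a < N)%N then embed x a else 0.
Proof.
case: ltnP => kN; last first.
  by rewrite big1 // => i _; rewrite phi_neq_index ?mulr0 // neq_ltn (leq_trans (ltn_ord i) kN).
rewrite (big_ord_single (F := fun n => x n * phi n a) kN) // => m _ mk.
by rewrite phi_neq_index ?mulr0.
Qed.

Lemma eq_gen_lat (f g : l1 R -> R) : f =1 g -> gen_lat f -> gen_lat g.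
Proof. by move=> /funext <-. Qed.

Lemma gen_lat_coord m : gen_lat (fun a => a m).
Proof.
by apply: eq_gen_lat (gen_delta (c0_unitv m)) => a; rewrite /delta pair_unitv.
Qed.

Lemma gen_lat_abs_coord m : gen_lat (fun a => `|a m|).
Proof.
apply: eq_gen_lat (gen_max (gen_lat_coord m) (gen_scale (-1) (gen_lat_coord m))) => a.
by rewrite mulN1r maxrN.
Qed.

Lemma gen_lat0 : gen_lat (fun _ : l1 R => 0 : R).
Proof. by apply: eq_gen_lat (gen_scale 0 (gen_lat_coord 0)) => a; rewrite mul0r. Qed.

Lemma gen_latB (f g : l1 R -> R) : gen_lat f -> gen_lat g -> gen_lat (fun a => f a - g a).
Proof.
move=> f_gen /(gen_scale (-1))/(gen_add f_gen).
by apply: eq_gen_lat => a; rewrite mulN1r.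
Qed.

Lemma gen_lat_sum N (F : nat -> l1 R -> R) : (forall n, gen_lat (F n)) ->
  gen_lat (fun a => \sum_(n < N) F n a).
Proof.
move=> F_gen; elim: N => [|N IH]; first by apply: eq_gen_lat gen_lat0 => a; rewrite big_ord0.
by apply: eq_gen_lat (gen_add IH (F_gen N)) => a; rewrite big_ord_recr.
Qed.

Lemma gen_lat_wnorm_trunc N : gen_lat (wnorm_trunc N).
Proof.
apply: eq_gen_lat (gen_lat_sum N (fun m => gen_scale (q ^+ m) (gen_lat_abs_coord m))) => a.
by rewrite /wnorm_trunc /series /= big_mkord; apply: eq_bigr => m _; rewrite mulrC.
Qed.

Lemma gen_lat_peak T n : gen_lat T -> gen_lat (peak T n).
Proof.
move=> T_gen; apply: gen_max gen_lat0 (gen_latB (gen_latB _ _) T_gen).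
  exact: gen_scale (gen_lat_abs_coord n).
exact: gen_scale (gen_lat_sum n (fun m => gen_lat_abs_coord m)).
Qed.

Definition approx x N a := \sum_(n < N) x n * psi N n a.

Lemma gen_lat_approx x N : gen_lat (approx x N).
Proof.
exact: gen_lat_sum (fun n => gen_scale (x n) (gen_lat_peak n (gen_lat_wnorm_trunc N))).
Qed.

Lemma norm_sum_disjoint_le (x g : nat -> R) N M B :
  (forall n, `|x n| <= M) -> (forall n, 0 <= g n <= B) ->
  (forall n k, (n < N)%N -> (k < N)%N -> n != k -> 0 < g n -> g k = 0) ->
  `|\sum_(n < N) x n * g n| <= M * B.
Proof.
move=> xM gB g_disj; have M0 := le_trans (normr_ge0 _) (xM 0%N).
have [g0 gB0] := andP (gB 0%N); have B0 := le_trans g0 gB0.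
have [[n nN gn]|no_pos] := pselect (exists2 n, (n < N)%N & 0 < g n).
  rewrite (big_ord_single (F := fun m => x m * g m) nN) => [|m mN mn]; last first.
    by rewrite (g_disj n m) ?mulr0 // eq_sym.
  have /andP[_ gnB] := gB n; rewrite normrM (ger0_norm (ltW gn)).
  by apply: ler_pM => //; exact: ltW.
rewrite big1 ?normr0 ?mulr_ge0 // => i _; have /andP[gi0 _] := gB i.
suff -> : g i = 0 by rewrite mulr0.
by apply/le_anti; rewrite gi0 andbT leNgt; apply/negP => gi; apply: no_pos; exists i.
Qed.

Lemma norm_embed_sub_approx x N M eps a :
  (forall n, `|x n| <= M) -> (forall n, (N <= n)%N -> `|x n| <= eps) -> 0 <= eps ->
  `|embed x a - approx x N a| <= eps * `|a (phi_index a)| + M * (wnorm a - wnorm_trunc N a).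
Proof.
move=> xM x_eps eps0.
have -> : embed x a - approx x N a =
    (embed x a - \sum_(n < N) x n * phi n a) - \sum_(n < N) x n * (psi N n a - phi n a).
  by rewrite /approx [in RHS](eq_bigr _ (fun n _ => mulrBr _ _ _)) sumrB; ring.
apply: le_trans (ler_normB _ _) _; apply: lerD.
  rewrite sum_phi_index; case: ltnP => kN; first by rewrite subrr normr0 mulr_ge0.
  rewrite subr0 /embed normrM [`|phi _ _|]ger0_norm ?peak_ge0 //.
  by rewrite ler_pM ?peak_ge0 ?x_eps ?phi_le_abs.
apply: (norm_sum_disjoint_le (g := fun n => psi N n a - phi n a)) => // [n|n k nN kN nk].
  by rewrite subr_ge0 phi_le_psi psi_sub_phi_le.
rewrite subr_gt0 => /(le_lt_trans (peak_ge0 _ _ _)) /(psi_disjoint nk nN kN) psik.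
have phik : phi k a = 0 by apply/le_anti; rewrite peak_ge0 andbT -psik phi_le_psi.
by rewrite psik phik subrr.
Qed.

Lemma sum_halfpow N K : (N <= K)%N -> \sum_(N <= m < K) q ^+ m = 2 * q ^+ N - 2 * q ^+ K.
Proof.
move=> /subnK <-; elim: (K - N)%N => [|d IH]; first by rewrite add0n big_geq // subrr.
rewrite addSn big_nat_recr ?leq_addl //= IH exprS mulrA mulfV // mul1r.
lra.
Qed.

Lemma admissible_sum_wnorm_tail_le s N : admissible s ->
  \sum_(a <- s) (wnorm a - wnorm_trunc N a) <= 2 * q ^+ N.
Proof.
move=> adm; have coord_le m : \sum_(a <- s) `|a m| <= 1.
  under eq_bigr do rewrite -pair_unitv.
  exact: adm (c0_unitv m) (c0norm_unitv_le1 m).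
have trunc_le K : (N <= K)%N ->
    \sum_(a <- s) (wnorm_trunc K a - wnorm_trunc N a) <= 2 * q ^+ N.
  move=> NK; under eq_bigr do rewrite /wnorm_trunc sub_series NK.
  rewrite exchange_big /=; apply: le_trans (_ : \sum_(N <= m < K) q ^+ m <= _).
    apply: ler_sum => m _; rewrite /wt -mulr_suml ler_piMl ?qpow_ge0 //.
  by rewrite sum_halfpow // lerBlDr lerDl mulr_ge0 ?qpow_ge0.
have cvg_trunc : (fun K => \sum_(a <- s) wnorm_trunc K a) @ \oo --> \sum_(a <- s) wnorm a.
  by apply: (cvg_sum_seq (u := fun a K => wnorm_trunc K a)) => a; exact: is_cvg_series_wt.
rewrite sumrB lerBlDr -(cvg_lim _ cvg_trunc) //; apply: limr_le; first exact: cvgP cvg_trunc.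
by near=> K; rewrite -lerBlDr -sumrB; apply: trunc_le; near: K; exists N.
Unshelve. all: end_near.
Qed.

Lemma FBL_embed x : c0 x -> FBL (embed x).
Proof.
move=> x0 e e0; set M := c0norm x; have M0 : 0 <= M := c0norm_ge0 x0.
have e3 : 0 < e / 3 by rewrite divr_gt0.
have /cvgr0Pnorm_lt /(_ _ e3) [N0 _ x_small] := x0.
have : (fun N => M * (2 * q ^+ N)) @ \oo --> 0.
  rewrite -(mulr0 M) -(mulr0 2); apply: cvgMr; apply: cvgMr; apply: cvg_expr.
  by rewrite ger0_norm ?invr_ge0 // invf_lt1 // ltr1n.
move=> /cvgr0Pnorm_lt /(_ _ e3) [N1 _ tail_small].
set N := maxn N0 N1; exists (approx x N); split; first exact: gen_lat_approx.
apply: le_lt_trans (_ : (_ <= (e / 3 + e / 3)%:E)%E) _; last by rewrite lte_fin; lra.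
apply: fbl_norm_le => s adm.
pose bound a := e / 3 * `|a (phi_index a)| + M * (wnorm a - wnorm_trunc N a).
apply: le_trans (_ : \sum_(a <- s) bound a <= _).
  apply: ler_sum => a _; apply: norm_embed_sub_approx => [n|n Nn|]; last exact: ltW.
    exact: ler_c0norm.
  by apply/ltW/x_small; rewrite /= (leq_trans (leq_maxl _ _) Nn).
rewrite big_split /= -!mulr_sumr; apply: lerD.
  by rewrite -[leRHS]mulr1 ler_wpM2l ?(ltW e3) ?admissible_sum_coord_le.
apply: le_trans (ler_wpM2l M0 (admissible_sum_wnorm_tail_le N adm)) _.
have := tail_small N (leq_maxr N0 N1); rewrite /= ger0_norm ?mulr_ge0 ?qpow_ge0 //.
exact: ltW.
Qed.

Lemma embed_lattice_hom_isometry : lattice_hom_isometry_c0_FBL embed.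
Proof.
split=> [x||c x _|x y _ _|]; first exact: FBL_embed.
- by move=> x y _ _; apply: funext => a; rewrite /embed mulrDl.
- by apply: funext => a; rewrite /embed mulrA.
- by apply: funext => a; rewrite /embed ![_ * phi _ _]mulrC maxr_pMr ?peak_ge0.
- exact: fbl_norm_embed.
Qed.

End FBLc0.

Theorem mainTheorem2 (R : realType) :
  exists (u : (nat -> R) -> l1 R -> R) (T : (l1 R -> R) -> nat -> R),
    [/\ lattice_hom_isometry_c0_FBL u,
        surj_lattice_hom_FBL_c0 T
      & forall x, c0 x -> T (u x) = x].
Proof.
exists (@embed R), (@coords R); split.
- exact: embed_lattice_hom_isometry.
- exact: coords_surj_lattice_hom.
- by move=> x _; exact: coords_embed.
Qed.
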